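(* Consider $n$ buyers and $m$ datasets, where buyer $i$ has budget $b_i\in\mathbb{R}_{\ge0}$ and linear valuation $v_i(\mathbf{x})=\sum_j\tau_{i,j}x_j$ with $\tau_{i,j}\ge0$. For a price vector $\mathbf{p}\in\mathbb{R}_{\ge0}^m$, consider the linear pricing function $\mathbf{x}\mapsto\mathbf{p}^\top\mathbf{x}$ and let $r_i(\mathbf{p})=r(\mathbf{p}^\top\cdot\mid v_i,b_i)$. Then $$r_i(\mathbf{p})=\min\Big(b_i,\sum_{j\in[m]:\,\tau_{i,j}\ge p_j}p_j\Big).$$ Moreover, there exists a price vector $\hat{\mathbf{p}}\in\mathbb{R}^m_{\ge0}$ with $r_i(\hat{\mathbf{p}})\ge r_i(\mathbf{p})$ for every buyer $i$ and $\hat p_j\in\{\tau_{i,j}:i\in[n]\}$ for every dataset $j$.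
   Context: For a pricing function $\mathbf{q}:[0,1]^m\to\mathbb{R}_{\ge0}$ (monotone, $\mathbf{q}(\mathbf{0})=0$), valuation $v$ and budget $b$: $F(\mathbf{q}\mid b)=\{\mathbf{x}\in[0,1]^m:\mathbf{q}(\mathbf{x})\le b\}$, $u^*=\sup_{\mathbf{x}\in F}(v(\mathbf{x})-\mathbf{q}(\mathbf{x}))$, $\mathrm{Dem}(\mathbf{q}\mid v,b)=\{\mathbf{x}\in F:v(\mathbf{x})-\mathbf{q}(\mathbf{x})=u^*\}$, and revenue $r(\mathbf{q}\mid v,b)=\sup_{\mathbf{x}\in\mathrm{Dem}}\mathbf{q}(\mathbf{x})$. *)

From HB Require Import structures.
From mathcomp Require Import all_boot all_order all_algebra.
From mathcomp Require Import classical_sets boolp reals.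
Set Implicit Arguments. Unset Strict Implicit. Unset Printing Implicit Defensive.
Import Order.TTheory GRing.Theory Num.Theory.
Local Open Scope ring_scope.
Local Open Scope classical_set_scope.

Section Pricing.
Variables (R : realType) (m : nat).

Definition cube : set ('I_m -> R) := [set x | forall j, 0 <= x j <= 1].

Definition feasible (q : ('I_m -> R) -> R) (b : R) : set ('I_m -> R) :=
  [set x | cube x /\ q x <= b].

Definition opt_util (q v : ('I_m -> R) -> R) (b : R) : R :=
  sup [set v x - q x | x in feasible q b].

Definition demand (q v : ('I_m -> R) -> R) (b : R) : set ('I_m -> R) :=
  [set x | feasible q b x /\ v x - q x = opt_util q v b].

Definition revenue (q v : ('I_m -> R) -> R) (b : R) : R :=
  sup [set q x | x in demand q v b].

Definition lin_map (c : 'I_m -> R) : ('I_m -> R) -> R :=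
  fun x => \sum_(j < m) c j * x j.

End Pricing.

(** A buyer facing linear prices [p] solves a fractional knapsack: maximise
    [sum_j (t_j - p_j) x_j] subject to [p . x <= b] over the cube.  A Lagrange
    multiplier [lam] for the budget constraint certifies an optimum that buys
    every dataset whose surplus-to-price ratio exceeds [lam] and fills the
    ties fractionally; choosing [lam] as large as possible makes the optimum
    spend [min(b, S)], with [S] the total price of the datasets worth their
    price.  No demanded bundle spends more: it pays at most [b] and, being
    optimal, buys nothing priced above its value.  Finally, raising each [p_j]
    to the cheapest valuation [tau_ij] that is at least [p_j] keeps every
    dataset acceptable to the same buyers while increasing its price, so
    every revenue [min(b_i, S_i)] can only grow. *)
From HB Require Import structures.
From mathcomp Require Import all_boot all_order all_algebra.
From mathcomp Require Import classical_sets boolp reals.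
From mathcomp Require Import ring lra.
Set Implicit Arguments. Unset Strict Implicit. Unset Printing Implicit Defensive.
Import Order.TTheory GRing.Theory Num.Theory.
Local Open Scope ring_scope.
Local Open Scope classical_set_scope.

Lemma sup_eq_ubound (R : realType) (E : set R) (r : R) :
  E r -> ubound E r -> sup E = r.
Proof.
move=> Er ubr; apply/le_anti/andP; split; first by apply: ge_sup => //; exists r.
by apply: ub_le_sup => //; exists r.
Qed.

Section LinearPricing.
Variables (R : realType) (m : nat).
Implicit Types (p t x y : 'I_m -> R) (b c lam : R).

Definition surplus t p x : R := \sum_(j < m) (t j - p j) * x j.

Definition optimal_bundle t p b x :=
  feasible (lin_map p) b x /\
  forall y, feasible (lin_map p) b y -> surplus t p y <= surplus t p x.

Lemma lin_mapB t p x : lin_map t x - lin_map p x = surplus t p x.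
Proof. by rewrite /lin_map -sumrB; apply: eq_bigr => j _; rewrite mulrBl. Qed.

(* Weak duality: [surplus t p z] is [lam * lin_map p z] plus a reduced
   surplus that such an [x] maximises coordinatewise. *)
Lemma surplus_max_of_multiplier t p b lam x :
  0 <= lam -> cube x -> (0 < lam -> lin_map p x = b) ->
  (forall j, lam * p j < t j - p j -> x j = 1) ->
  (forall j, t j - p j < lam * p j -> x j = 0) ->
  forall y, feasible (lin_map p) b y -> surplus t p y <= surplus t p x.
Proof.
move=> lam0 cx pxb x1 x0 y [cy py].
have split_surplus z : surplus t p z =
    \sum_(j < m) (t j - p j - lam * p j) * z j + lam * lin_map p z.
  rewrite /surplus /lin_map mulr_sumr -big_split /=.
  by apply: eq_bigr => j _; ring.
rewrite !split_surplus; apply: lerD.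
  apply: ler_sum => j _; have /andP[y0 y1] := cy j.
  case: (ltgtP (t j - p j - lam * p j) 0) => [neg|pos|->]; last by rewrite !mul0r.
  - by rewrite x0 ?mulr0 ?mulr_le0_ge0 ?(ltW neg) // -subr_lt0.
  - by rewrite x1 ?mulr1 ?ler_piMr ?(ltW pos) // -subr_gt0.
have [->|lam_neq0] := eqVneq lam 0; first by rewrite !mul0r.
by rewrite pxb ?ler_wpM2l // lt_def lam_neq0.
Qed.

Lemma optimal_bundle_vanish t p b x : (forall j, 0 <= p j) ->
  optimal_bundle t p b x -> forall j, t j < p j -> x j = 0.
Proof.
move=> p_ge0 [[cx pxb] xmax] j tp.
have x_ge0 k : 0 <= x k by have /andP[] := cx k.
pose z k := if p k <= t k then x k else 0.
have fz : feasible (lin_map p) b z.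
  split=> [k|]; first by rewrite /z; case: ifP => _; rewrite ?lexx ?ler01.
  apply: le_trans pxb; apply: ler_sum => k _; rewrite /z.
  by case: ifP => _ //; rewrite mulr0 mulr_ge0.
pose gain k := (t k - p k) * z k - (t k - p k) * x k.
have gain_ge0 k : true -> 0 <= gain k.
  move=> _; rewrite /gain /z; case: ifP => [_|/negbT]; first by rewrite subrr.
  by rewrite -ltNge mulr0 sub0r oppr_ge0 => ?; rewrite mulr_le0_ge0 //; lra.
have gain0 : \sum_(k < m) gain k = 0.
  apply/le_anti; rewrite sumr_ge0 // andbT sumrB subr_le0; exact: xmax.
have := psumr_eq0P gain_ge0 gain0 (i := j) isT.
rewrite /gain /z lt_geF // mulr0 sub0r => /eqP.
by rewrite oppr_eq0 mulf_eq0 subr_eq0 lt_eqF //= => /eqP.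
Qed.

Section Multiplier.
Variables (t p : 'I_m -> R).
Hypothesis p_ge0 : forall j, 0 <= p j.

Definition cost_gt lam : R := \sum_(j < m | lam * p j < t j - p j) p j.
Definition cost_ge lam : R := \sum_(j < m | lam * p j <= t j - p j) p j.

Lemma cost_ge_zero : cost_ge 0 = \sum_(j < m | p j <= t j) p j.
Proof. by apply: eq_bigl => j; rewrite mul0r subr_ge0. Qed.

Lemma cost_gt_le_ge lam mu :
  (forall j, 0 < p j -> lam * p j < t j - p j -> mu * p j <= t j - p j) ->
  cost_gt lam <= cost_ge mu.
Proof.
move=> next; rewrite /cost_gt /cost_ge big_mkcond [X in _ <= X]big_mkcond /=.
apply: ler_sum => j _; case: ifP => gt_lam; last by case: ifP.
have [p_gt0|] := boolP (0 < p j); first by rewrite next.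
by rewrite lt_def p_ge0 andbT negbK => /eqP ->; case: ifP.
Qed.

(* Take for [lam] the largest candidate ratio (0 or some (t_j - p_j) / p_j)
   with [b <= cost_ge lam]; were [cost_gt lam > b], the next ratio above
   [lam] would be a larger candidate, by [cost_gt_le_ge]. *)
Lemma exists_multiplier b : 0 <= b -> b <= cost_ge 0 ->
  exists2 lam, 0 <= lam & cost_gt lam <= b <= cost_ge lam.
Proof.
move=> b0 b_le_S.
pose ratio (k : option 'I_m) := if k is Some j then (t j - p j) / p j else 0.
pose admissible k := (0 <= ratio k) && (b <= cost_ge (ratio k)).
have [k /andP[lam0 b_le_lam] lam_max] :=
  @arg_maxP _ _ _ None admissible ratio (introT andP (conj (lexx 0) b_le_S)).
exists (ratio k) => //; rewrite b_le_lam andbT leNgt; apply/negP => b_lt.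
have [j1 /andP[pj1 gt1]] : exists j, (0 < p j) && (ratio k * p j < t j - p j).
  have /psumr_neq0P[//|j /andP[gt pj]] : cost_gt (ratio k) <> 0.
    by move=> c0; move: b_lt; rewrite c0 ltNge b0.
  by exists j; rewrite pj gt.
pose above j := (0 < p j) && (ratio k * p j < t j - p j).
have [j0 /andP[pj0 gt0] j0_min] :=
  @arg_minP _ _ _ j1 above (fun j => (t j - p j) / p j) (introT andP (conj pj1 gt1)).
have lam_lt : ratio k < ratio (Some j0) by rewrite /= ltr_pdivlMr.
have : admissible (Some j0).
  rewrite /admissible (le_trans lam0 (ltW lam_lt)) /=.
  apply/ltW/(lt_le_trans b_lt)/cost_gt_le_ge => j pj gt.
  by rewrite -ler_pdivlMr // j0_min /above ?pj.
by move/lam_max/(lt_le_trans lam_lt); rewrite ltxx.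
Qed.

Lemma exists_bundle_of_multiplier lam c :
  cost_gt lam <= c <= cost_ge lam ->
  exists x, [/\ cube x, lin_map p x = c,
    forall j, lam * p j < t j - p j -> x j = 1 &
    forall j, t j - p j < lam * p j -> x j = 0].
Proof.
move=> /andP[gt_c c_ge].
pose ties := \sum_(j < m | lam * p j == t j - p j) p j.
have ties_ge0 : 0 <= ties by rewrite sumr_ge0.
have cost_geE : cost_ge lam = cost_gt lam + ties.
  rewrite /cost_ge /cost_gt /ties big_mkcond [X in X + _]big_mkcond.
  rewrite [X in _ + X]big_mkcond -big_split /=; apply: eq_bigr => j _.
  by rewrite le_eqVlt; case: ltgtP; rewrite ?addr0 ?add0r.
(* the fraction of the tied datasets that exactly exhausts [c] *)
pose f := if ties == 0 then 0 else (c - cost_gt lam) / ties.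
have f01 : 0 <= f <= 1.
  rewrite /f; case: eqP => [_|/eqP ties_neq0]; first by rewrite lexx ler01.
  have ties_gt0 : 0 < ties by rewrite lt_def ties_neq0.
  rewrite divr_ge0 ?subr_ge0 ?(ltW ties_gt0) //= ler_pdivrMr // mul1r; lra.
pose x j : R := if lam * p j < t j - p j then 1
                else if lam * p j == t j - p j then f else 0.
exists x; split=> [j||j lt|j gt].
- by rewrite /x; case: ifP => _; [|case: ifP => _]; rewrite ?lexx ?ler01.
- have -> : lin_map p x = cost_gt lam + f * ties.
    rewrite /lin_map /cost_gt /ties [X in _ = X + _]big_mkcond [X in _ + _ * X]big_mkcond.
    rewrite mulr_sumr -big_split /=; apply: eq_bigr => j _; rewrite /x.
    by case: ltgtP => _; rewrite ?mulr0 ?mulr1 ?addr0 ?add0r // mulrC.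
  rewrite /f; case: eqP => [ties0|/eqP ties_neq0]; last by rewrite mulfVK // addrC subrK.
  by apply/le_anti; rewrite mul0r addr0 gt_c -[cost_gt _]addr0 -ties0 -cost_geE.
- by rewrite /x lt.
- by rewrite /x lt_gtF // eq_sym lt_eqF.
Qed.

End Multiplier.

Lemma exists_optimal_bundle t p b : (forall j, 0 <= p j) -> 0 <= b ->
  exists2 x, optimal_bundle t p b x &
    lin_map p x = Num.min b (\sum_(j < m | p j <= t j) p j).
Proof.
move=> p_ge0 b0; rewrite -cost_ge_zero.
have optimal lam x : 0 <= lam -> cube x -> lin_map p x <= b ->
    (0 < lam -> lin_map p x = b) ->
    (forall j, lam * p j < t j - p j -> x j = 1) ->
    (forall j, t j - p j < lam * p j -> x j = 0) -> optimal_bundle t p b x.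
  move=> lam0 cx pxb pxE x1 x0.
  by split; [split | exact: surplus_max_of_multiplier pxE x1 x0].
have [S_le_b|b_lt_S] := leP (cost_ge t p 0) b.
  have [|x [cx px x1 x0]] := @exists_bundle_of_multiplier t p p_ge0 0 (cost_ge t p 0).
    by rewrite lexx andbT; apply: cost_gt_le_ge => // j _ /ltW.
  by exists x => //; apply: (optimal 0); rewrite ?px ?ltxx.
have [lam lam0 lam_b] := exists_multiplier p_ge0 b0 (ltW b_lt_S).
have [x [cx px x1 x0]] := exists_bundle_of_multiplier p_ge0 lam_b.
by exists x => //; apply: (optimal lam); rewrite ?px.
Qed.

Lemma revenue_lin_map t p b : (forall j, 0 <= p j) -> 0 <= b ->
  revenue (lin_map p) (lin_map t) b = Num.min b (\sum_(j < m | p j <= t j) p j).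
Proof.
move=> p_ge0 b0; have [x [fx xmax] px] := exists_optimal_bundle t p_ge0 b0.
have opt_utilE : opt_util (lin_map p) (lin_map t) b = surplus t p x.
  apply: sup_eq_ubound; first by exists x => //; rewrite lin_mapB.
  by move=> _ [y fy <-]; rewrite lin_mapB; exact: xmax.
apply: sup_eq_ubound; first by exists x => //; split; rewrite // opt_utilE lin_mapB.
move=> _ [z [[cz pzb] uz] <-]; rewrite opt_utilE lin_mapB in uz.
have z_opt : optimal_bundle t p b z by split=> // y /xmax; rewrite uz.
rewrite le_min pzb /lin_map [X in _ <= X]big_mkcond /=; apply: ler_sum => j _.
have /andP[z0 z1] := cz j; case: (leP (p j) (t j)) => [_|tp]; first by rewrite ler_piMr.
by rewrite (optimal_bundle_vanish p_ge0 z_opt tp) mulr0.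
Qed.

Lemma sum_accepted_prices_le t p q : (forall j, 0 <= q j) ->
  (forall j, p j <= t j -> p j <= q j <= t j) ->
  \sum_(j < m | p j <= t j) p j <= \sum_(j < m | q j <= t j) q j.
Proof.
move=> q_ge0 raise; rewrite big_mkcond [X in _ <= X]big_mkcond /=.
apply: ler_sum => j _; case: ifP => [/raise/andP[pq ->] //|_]; by case: ifP.
Qed.

End LinearPricing.

Lemma exists_rounded_price (R : realDomainType) (n : nat) (v : 'I_n -> R) (x : R) :
  (0 < n)%N -> exists k, forall i, x <= v i -> x <= v k <= v i.
Proof.
move=> n_gt0; have [i1 xi1|none] := pickP (fun i => x <= v i).
  have [k xk k_min] := @arg_minP _ _ _ i1 (fun i => x <= v i) v xi1.
  by exists k => i xi; rewrite xk k_min.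
by exists (Ordinal n_gt0) => i; rewrite none.
Qed.

Theorem mainTheorem4 (R : realType) (n m : nat)
  (tau : 'I_n -> 'I_m -> R) (b : 'I_n -> R) :
  (0 < n)%N ->
  (forall i j, 0 <= tau i j) ->
  (forall i, 0 <= b i) ->
  (forall p : 'I_m -> R, (forall j, 0 <= p j) ->
     forall i, revenue (lin_map p) (lin_map (tau i)) (b i)
               = Num.min (b i) (\sum_(j < m | p j <= tau i j) p j)) /\
  (forall p : 'I_m -> R, (forall j, 0 <= p j) ->
     exists ph : 'I_m -> R,
       (forall j, 0 <= ph j) /\
       (forall i, revenue (lin_map p) (lin_map (tau i)) (b i)
                  <= revenue (lin_map ph) (lin_map (tau i)) (b i)) /\
       (forall j, exists i, ph j = tau i j)).
Proof.
move=> n_gt0 tau_ge0 b_ge0; split=> [p p_ge0 i|p p_ge0]; first exact: revenue_lin_map.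
have [k k_round] := choice (fun j => exists_rounded_price (tau^~ j) (p j) n_gt0).
pose ph j := tau (k j) j.
have ph_ge0 j : 0 <= ph j by apply: tau_ge0.
exists ph; split=> //; split=> [i|j]; last by exists (k j).
rewrite !revenue_lin_map //; apply: le_min2 => //.
exact: sum_accepted_prices_le ph_ge0 (fun j => k_round j i).
Qed.
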